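(* Let $R$ be a unital commutative ring and $g\in\mathrm{SL}_d(R)$, and let \[ \mathbf{L}_g(R)=\{(w,\,g^{-1}\theta(w)g):w\in\mathbf{H}_{\tau(g)}(R)\}. \] Then $\mathbf{L}_g(R)$ is a subgroup of $\mathrm{SO}_Q(R)\times\mathrm{ASL}_{d-1}(R)$, and it is exactly the stabilizer of $g$ under the right action $g\cdot(\rho,\eta)=\theta(\rho)^{-1}g\eta$ of $\mathrm{SO}_Q(R)\times\mathrm{ASL}_{d-1}(R)$ on $\mathrm{SL}_d(R)$.
   Context: $Q(\mathbf{x})=\mathbf{x}^tM\mathbf{x}$ with $M\in M_d(\mathbb{Z})$ symmetric (integral quadratic form), $\mathrm{SO}_Q(R)=\{h\in\mathrm{SL}_d(R):h^tMh=M\}$, and for $\mathbf{v}\in R^d$, $\mathbf{H}_{\mathbf{v}}(R)=\{h\in\mathrm{SO}_Q(R):h\mathbf{v}=\mathbf{v}\}$. $\theta(g)=(g^t)^{-1}$, $\tau(g)=\theta(g)\mathbf{e}_d$. $\mathrm{ASL}_{d-1}(R)\le\mathrm{SL}_d(R)$ is the group of matrices $\begin{pmatrix}m&\mathbf{w}\\ \mathbf{0}&1\end{pmatrix}$, $m\in\mathrm{SL}_{d-1}(R)$, $\mathbf{w}\in R^{d-1}$. *)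

From HB Require Import structures.
From mathcomp Require Import all_boot all_order all_algebra.
Set Implicit Arguments. Unset Strict Implicit. Unset Printing Implicit Defensive.
Import Order.TTheory GRing.Theory Num.Theory.
Local Open Scope ring_scope.

(* Dimension d is written n.+1 (d >= 1 so that e_d exists). *)
Section Defs.
Variables (R : comUnitRingType) (n : nat).
Local Notation d := n.+1.

Definition MR (M : 'M[int]_d) : 'M[R]_d := map_mx (fun z : int => z%:~R) M.

Definition SL (g : 'M[R]_d) : Prop := \det g = 1.

Definition SOQ (M : 'M[int]_d) (h : 'M[R]_d) : Prop :=
  SL h /\ h^T *m MR M *m h = MR M.

Definition Hv (M : 'M[int]_d) (v : 'cV[R]_d) (h : 'M[R]_d) : Prop :=
  SOQ M h /\ h *m v = v.

(* ASL_{d-1}(R): matrices (m w; 0 1) with m in SL_{d-1}(R); equivalently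
   determinant 1 and last row equal to e_d^t. *)
Definition ASL (g : 'M[R]_d) : Prop :=
  SL g /\ row ord_max g = row ord_max 1%:M.

Definition theta (g : 'M[R]_d) : 'M[R]_d := invmx (g^T).

Definition e_d : 'cV[R]_d := delta_mx ord_max 0.

Definition tau (g : 'M[R]_d) : 'cV[R]_d := theta g *m e_d.

Definition Lg (M : 'M[int]_d) (g : 'M[R]_d) (p : 'M[R]_d * 'M[R]_d) : Prop :=
  exists2 w, Hv M (tau g) w & p = (w, invmx g *m theta w *m g).

Definition act (g : 'M[R]_d) (p : 'M[R]_d * 'M[R]_d) : 'M[R]_d :=
  invmx (theta p.1) *m g *m p.2.

Definition SOxASL (M : 'M[int]_d) (p : 'M[R]_d * 'M[R]_d) : Prop :=
  SOQ M p.1 /\ ASL p.2.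

Definition is_subgroup (G S : 'M[R]_d * 'M[R]_d -> Prop) : Prop :=
  [/\ (forall p, S p -> G p),
      S (1%:M, 1%:M),
      (forall p q, S p -> S q -> S (p.1 *m q.1, p.2 *m q.2)) &
      (forall p, S p -> S (invmx p.1, invmx p.2))].

End Defs.

From HB Require Import structures.
From mathcomp Require Import all_boot all_order all_algebra.
Import Order.TTheory GRing.Theory Num.Theory.
Set Implicit Arguments. Unset Strict Implicit. Unset Printing Implicit Defensive.
Local Open Scope ring_scope.

(* Since theta is multiplicative, w |-> (w, g^-1 theta(w) g) is a group
   morphism, so L_g is the image of the group H_tau(g).  Its second component
   lies in ASL iff its last row is e_d^T, i.e. e_d^T g^-1 theta(w) = e_d^T g^-1;
   transposing, this says w^-1 tau(g) = tau(g).  Finally (rho, eta) fixes g iff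
   eta = g^-1 theta(rho) g, which for rho in SO_Q forces rho in H_tau(g) by the
   same last-row criterion. *)

Section StabilizerOfG.
Variables (R : comUnitRingType) (n : nat).
Local Notation d := n.+1.
Implicit Types (g h w A : 'M[R]_d) (M : 'M[int]_d) (u v : 'cV[R]_d).

Lemma invmxM A B :
  A \in unitmx -> B \in unitmx -> invmx (A *m B) = invmx B *m invmx A.
Proof. exact: invrM. Qed.

Lemma SL_unitmx g : SL g -> g \in unitmx.
Proof. by rewrite unitmxE => ->; apply: unitr1. Qed.

Lemma SL1 : SL (1%:M : 'M[R]_d).
Proof. exact: det1. Qed.

Lemma SLM g h : SL g -> SL h -> SL (g *m h).
Proof. by rewrite /SL det_mulmx => -> ->; rewrite mulr1. Qed.

Lemma SLV g : SL g -> SL (invmx g).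
Proof. by rewrite /SL det_inv => ->; rewrite invr1. Qed.

Lemma SL_theta w : SL w -> SL (theta w).
Proof. by rewrite /SL det_inv det_tr => ->; rewrite invr1. Qed.

Lemma unitmx_theta w : (theta w \in unitmx) = (w \in unitmx).
Proof. by rewrite unitmx_inv unitmx_tr. Qed.

Lemma theta1 : theta (1%:M : 'M[R]_d) = 1%:M.
Proof. by rewrite /theta trmx1 invmx1. Qed.

Lemma thetaM w h :
  w \in unitmx -> h \in unitmx -> theta (w *m h) = theta w *m theta h.
Proof. by move=> uw uh; rewrite /theta trmx_mul invmxM ?unitmx_tr. Qed.

Lemma thetaV w : theta (invmx w) = invmx (theta w).
Proof. by rewrite /theta trmx_inv. Qed.

Lemma trmx_theta w : (theta w)^T = invmx w.
Proof. by rewrite trmx_inv trmxK. Qed.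

Lemma trmx_tau g : (tau g)^T = row ord_max (invmx g).
Proof. by rewrite trmx_mul trmx_theta trmx_delta rowE. Qed.

Lemma SOQ1 M : SOQ M (1%:M : 'M[R]_d).
Proof. by split; [exact: SL1 | rewrite trmx1 mul1mx mulmx1]. Qed.

Lemma SOQM M w h : SOQ M w -> SOQ M h -> SOQ M (w *m h).
Proof.
move=> [sw Qw] [sh Qh]; split; first exact: SLM.
by rewrite trmx_mul !mulmxA -(mulmxA h^T) -(mulmxA h^T) Qw Qh.
Qed.

Lemma SOQV M w : SOQ M w -> SOQ M (invmx w).
Proof.
move=> [sw Qw]; have uw := SL_unitmx sw; split; first exact: SLV.
by rewrite trmx_inv -{1}Qw !mulmxA mulVmx ?unitmx_tr // mul1mx mulmxK.
Qed.

Lemma Hv_unitmx M v w : Hv M v w -> w \in unitmx.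
Proof. by move=> [[sw _] _]; apply: SL_unitmx. Qed.

Lemma Hv1 M v : Hv M v 1%:M.
Proof. by split; [exact: SOQ1 | rewrite mul1mx]. Qed.

Lemma HvM M v w h : Hv M v w -> Hv M v h -> Hv M v (w *m h).
Proof. by move=> [Qw fw] [Qh fh]; split; [exact: SOQM | rewrite -mulmxA fh fw]. Qed.

Lemma HvV M v w : Hv M v w -> Hv M v (invmx w).
Proof.
move=> Hw; have uw := Hv_unitmx Hw; case: Hw => Qw fw.
by split; [exact: SOQV | rewrite -{1}fw mulKmx].
Qed.

Lemma row_theta_fixed w u :
  w \in unitmx -> u^T *m theta w = u^T <-> w *m u = u.
Proof.
move=> uw; split=> [fixed | fixed].
- have /(congr1 trmx) := fixed; rewrite trmx_mul trmx_theta trmxK.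
  by move/(canRL (mulKVmx uw))/esym.
- by apply: trmx_inj; rewrite trmx_mul trmx_theta trmxK -{1}fixed mulKmx.
Qed.

Lemma ASL_conj_theta g w :
  SL g -> SL w -> ASL (invmx g *m theta w *m g) <-> w *m tau g = tau g.
Proof.
move=> sg sw; have ug := SL_unitmx sg.
have sconj : SL (invmx g *m theta w *m g).
  exact: SLM (SLM (SLV sg) (SL_theta sw)) sg.
apply: iff_trans (row_theta_fixed (tau g) (SL_unitmx sw)).
rewrite trmx_tau /ASL -(mulVmx ug) !row_mul.
by split=> [[_ /(can_inj (mulmxK ug))] | ->].
Qed.

Lemma act_fixed g A e :
  g \in unitmx -> A \in unitmx ->
  invmx A *m g *m e = g <-> e = invmx g *m A *m g.
Proof.
move=> ug uA; rewrite -!mulmxA; split=> [fixed | ->].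
- by rewrite -{2}fixed mulKVmx // mulKmx.
- by rewrite mulKVmx // mulKmx.
Qed.

Definition Lmap g w : 'M[R]_d * 'M[R]_d := (w, invmx g *m theta w *m g).

Lemma Lmap1 g : g \in unitmx -> Lmap g 1%:M = (1%:M, 1%:M).
Proof. by move=> ug; rewrite /Lmap theta1 mulmx1 mulVmx. Qed.

Lemma LmapM g w h : g \in unitmx -> w \in unitmx -> h \in unitmx ->
  Lmap g (w *m h) = ((Lmap g w).1 *m (Lmap g h).1, (Lmap g w).2 *m (Lmap g h).2).
Proof. by move=> ug uw uh; rewrite /Lmap thetaM // !mulmxA mulmxK. Qed.

Lemma LmapV g w : g \in unitmx -> w \in unitmx ->
  Lmap g (invmx w) = (invmx (Lmap g w).1, invmx (Lmap g w).2).
Proof.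
move=> ug uw; have uth : theta w \in unitmx by rewrite unitmx_theta.
have ugV : invmx g \in unitmx by rewrite unitmx_inv.
rewrite /Lmap thetaV /= [invmx (_ *m g)]invmxM ?unitmx_mul ?ugV ?uth //.
by rewrite [invmx (invmx g *m _)]invmxM // invmxK mulmxA.
Qed.

Lemma SOxASL_Lmap M g w : SL g -> Hv M (tau g) w -> SOxASL M (Lmap g w).
Proof. by move=> sg [[sw Qw] fw]; split=> //; apply/ASL_conj_theta. Qed.

Lemma Lg_subgroup M g : SL g -> is_subgroup (SOxASL M) (Lg M g).
Proof.
move=> sg; have ug := SL_unitmx sg; split.
- by move=> _ [w Hw ->]; apply: SOxASL_Lmap.
- by exists 1%:M; [exact: Hv1 | rewrite [RHS]Lmap1].
- move=> _ _ [w Hw ->] [h Hh ->]; exists (w *m h); first exact: HvM.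
  by rewrite [RHS]LmapM // (Hv_unitmx Hw, Hv_unitmx Hh).
- move=> _ [w Hw ->]; exists (invmx w); first exact: HvV.
  by rewrite [RHS]LmapV // (Hv_unitmx Hw).
Qed.

Lemma Lg_stabilizer M g p :
  SL g -> SOxASL M p -> act g p = g <-> Lg M g p.
Proof.
case: p => w e sg [[/= sw Qw] /= Ae]; have ug := SL_unitmx sg.
have uth : theta w \in unitmx by rewrite unitmx_theta SL_unitmx.
rewrite /act /=; apply: iff_trans; first exact: act_fixed e ug uth.
split=> [e_conj | [h _ [-> ->]] //].
exists w; last by rewrite e_conj.
split; first by split.
by apply/(ASL_conj_theta sg sw); rewrite -e_conj.
Qed.

End StabilizerOfG.

Theorem lemma3p2 (R : comUnitRingType) (n : nat) (M : 'M[int]_n.+1)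
    (g : 'M[R]_n.+1) :
  M^T = M -> SL g ->
  is_subgroup (SOxASL (R := R) M) (Lg M g) /\
  (forall p : 'M[R]_n.+1 * 'M[R]_n.+1,
     SOxASL M p -> (act g p = g <-> Lg M g p)).
Proof.
move=> _ sg; split; first exact: Lg_subgroup.
by move=> p; apply: Lg_stabilizer.
Qed.
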